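(* Let $\phi:M_D(\mathbb{C})\to M_D(\mathbb{C})$ be a primitive unital Schwarz map and $n\in\mathbb{N}$. Then $\mathcal{M}_{\phi^n}=\mathcal{M}_{\phi^{n+1}}$ if and only if $n\ge\kappa(\phi)$.
   Context: $M_D(\mathbb{C})$ is the algebra of complex $D\times D$ matrices. A linear map $\phi$ is a unital Schwarz map if $\phi(I)=I$ and $\phi(a^*a)\ge\phi(a)^*\phi(a)$ for all $a$; it is primitive if some power $\phi^n$ maps every nonzero positive semidefinite matrix to a positive definite matrix. For a unital Schwarz map $\psi$, the multiplicative domain is $\mathcal{M}_\psi=\{a : \psi(a^*a)=\psi(a)^*\psi(a) \text{ and } \psi(aa^* )=\psi(a)\psi(a)^*\}$; for primitive unital Schwarz $\phi$ one has $\mathcal{M}_{\phi^{n+1}}\subseteq\mathcal{M}_{\phi^n}$ for all $n$, and $\kappa(\phi)$ is the minimal $k\in\mathbb{N}$ with $\bigcap_{n}\mathcal{M}_{\phi^n}=\mathcal{M}_{\phi^k}$. *)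

(* matrices over C := R[i] for an arbitrary R : realType
   (every realType is a model of the reals, so R[i] is a model of C). *)
From mathcomp Require Import all_boot all_algebra.
From mathcomp Require Import reals.
From mathcomp.real_closed Require Import complex.
Set Implicit Arguments.
Unset Strict Implicit.
Unset Printing Implicit Defensive.
Import GRing.Theory Num.Theory.
Local Open Scope ring_scope.

Section Defs.
Variable R : realType.
Variable D : nat.
Local Notation C := (R[i]).
Local Notation M := 'M[C]_D.

Definition adjmx (a : M) : M := (map_mx Num.conj a)^T.

Definition psd (a : M) : Prop :=
  adjmx a = a /\ forall v : 'rV[C]_D, 0 <= (v *m a *m (map_mx Num.conj v)^T) 0 0.

Definition pd (a : M) : Prop :=
  adjmx a = a /\ forall v : 'rV[C]_D, v != 0 -> 0 < (v *m a *m (map_mx Num.conj v)^T) 0 0.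

Definition unital_schwarz (phi : M -> M) : Prop :=
  linear phi /\ phi 1%:M = 1%:M /\
  forall a : M, psd (phi (adjmx a *m a) - adjmx (phi a) *m phi a).

Definition primitive (phi : M -> M) : Prop :=
  exists n : nat, forall x : M, psd x -> x != 0 -> pd (iter n phi x).

Definition mult_dom (psi : M -> M) (a : M) : Prop :=
  psi (adjmx a *m a) = adjmx (psi a) *m psi a /\
  psi (a *m adjmx a) = psi a *m adjmx (psi a).

(* k is kappa(phi): the minimal k in N = {0,1,2,...} such that
   \bigcap_n M_{phi^n} = M_{phi^k} *)
Definition is_kappa (phi : M -> M) (k : nat) : Prop :=
  (forall a, (forall n, mult_dom (iter n phi) a) <-> mult_dom (iter k phi) a) /\
  (forall j, (forall a, (forall n, mult_dom (iter n phi) a) <-> mult_dom (iter j phi) a)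
             -> (k <= j)%N).
End Defs.

(* For a unital Schwarz map psi put D(x, y) = psi(x^* y) - psi(x)^* psi(y).
   Since psi commutes with the adjoint, a lies in the multiplicative domain of
   psi iff D(b, b) = 0 for b = a and for b = a^*, and since D is a positive
   sesquilinear form, Cauchy-Schwarz makes this set a linear subspace.  For a
   composite, D_(psi2 o psi1)(a, a) = psi2 (D_psi1(a, a)) + D_psi2(psi1 a, psi1 a)
   is a sum of two positive matrices.  A primitive map is faithful, hence so
   are its powers, and therefore M_(phi^(n+1)) = M_phi ∩ phi^-1 (M_(phi^n)).
   So once two consecutive domains coincide the chain is constant from there
   on, and a decreasing chain of subspaces of the finite-dimensional space
   M_D(C) must have two consecutive equal terms. *)

From mathcomp Require Import all_boot all_order all_algebra.
From mathcomp Require Import reals.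
From mathcomp.real_closed Require Import complex.
From mathcomp Require Import ring zify.
From Stdlib Require Import Classical ClassicalEpsilon.
Import Order.TTheory GRing.Theory Num.Theory.
Set Implicit Arguments.
Unset Strict Implicit.
Unset Printing Implicit Defensive.
Local Open Scope ring_scope.

Section SubspaceChain.
Variables (K : fieldType) (vT : vectType K).

Definition subspace_prop (P : vT -> Prop) :=
  P 0 /\ forall c u v, P u -> P v -> P (c *: u + v).

Lemma vspace_of_subspace_prop (P : vT -> Prop) : subspace_prop P ->
  exists U : {vspace vT}, forall v, v \in U <-> P v.
Proof.
move=> [P0 PP].
suff grow k (U : {vspace vT}) : (forall v, v \in U -> P v) -> (\dim {:vT} - \dim U <= k)%N ->
    exists U' : {vspace vT}, forall v, v \in U' <-> P v.
  by apply: (grow _ 0%VS) => // v; rewrite memv0 => /eqP ->.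
elim: k U => [|k IHk] U UP codimU.
  have /eqP UT : U == fullv by rewrite eqEdim subvf -subn_eq0 -leqn0.
  by exists U => v; split=> [/UP //|]; rewrite UT memvf.
have [PU|] := classic (forall v, P v -> v \in U).
  by exists U => v; split=> [/UP|/PU].
move=> /not_all_ex_not [w wU].
have [Pw /negP {}wU] := imply_to_and _ _ wU.
apply: (IHk (U + <[w]>)%VS).
  move=> _ /memv_addP [u uU [_ /vlineP [c ->] ->]].
  by rewrite addrC; apply: PP => //; apply: UP.
have : (\dim U < \dim (U + <[w]>))%N.
  rewrite (ltn_leqif (dimv_leqif_eq (addvSl U _))); apply: contra wU => /eqP ->.
  by apply/memv_addP; exists 0; rewrite ?mem0v //; exists w; rewrite ?memv_line ?add0r.
have := dimvS (subvf (U + <[w]>)%VS); lia.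
Qed.

Lemma vspace_chain_stable (U : nat -> {vspace vT}) :
  (forall n, (U n.+1 <= U n)%VS) -> exists n, U n.+1 = U n.
Proof.
move=> decU; apply: NNPP => noStable.
have shrink n : (\dim (U n) + n <= \dim (U 0%N))%N.
  elim: n => [|n IHn]; first by rewrite addn0.
  rewrite addnS (leq_trans _ IHn) // ltn_add2r (ltn_leqif (dimv_leqif_eq (decU n))).
  by apply/eqP => Un; apply: noStable; exists n.
by have := shrink (\dim (U 0%N)).+1; lia.
Qed.

Lemma subspace_chain_stable (P : nat -> vT -> Prop) :
  (forall n, subspace_prop (P n)) -> (forall n v, P n.+1 v -> P n v) ->
  exists n, forall v, P n v <-> P n.+1 v.
Proof.
move=> Psub Pdec.
have [U UP] := choice _ (fun n => vspace_of_subspace_prop (Psub n)).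
have decU n : (U n.+1 <= U n)%VS by apply/subvP => v /UP /Pdec /UP.
have [n Un] := vspace_chain_stable decU.
by exists n => v; rewrite -!UP Un.
Qed.

End SubspaceChain.

Lemma ex_minimal_nat (Q : nat -> Prop) :
  (exists n, Q n) -> exists k, Q k /\ forall j, Q j -> (k <= j)%N.
Proof.
move=> [n Qn]; apply: NNPP => no_min; move: n Qn; elim/ltn_ind => j IHj Qj.
apply: no_min; exists j; split=> // i Qi; rewrite leqNgt; apply/negP => ij.
exact: IHj i ij Qi.
Qed.

Lemma real_quadratic_ge0_linear_eq0 (F : numFieldType) (s g : F) : 0 <= g ->
  (forall r, r \is Num.real -> 0 <= r * s + r ^+ 2 * g) -> s = 0.
Proof.
move=> g_ge0 Hr.
have g1_gt0 : 0 < 1 + g by rewrite ltr_wpDr.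
have s_real : s \is Num.real.
  have := Hr 1 (rpred1 _); rewrite mul1r expr1n mul1r => /ger0_real sg_real.
  by rewrite -(addrK g s) rpredB // ger0_real.
have r_real : - s / (1 + g) \is Num.real.
  by rewrite rpredM ?rpredN ?rpredV // ger0_real // ltW.
have := Hr _ r_real.
have -> : - s / (1 + g) * s + (- s / (1 + g)) ^+ 2 * g = - (s / (1 + g)) ^+ 2.
  by field; rewrite gt_eqF.
rewrite oppr_ge0 => sq_le0.
have /eqP : (s / (1 + g)) ^+ 2 = 0.
  by apply/eqP; rewrite eq_le sq_le0 -realEsqr rpredM ?rpredV // ger0_real // ltW.
by rewrite sqrf_eq0 mulf_eq0 invr_eq0 (gt_eqF g1_gt0) orbF => /eqP.
Qed.

Lemma sesquilinear_ge0_cross_eq0 (C : numClosedFieldType) (al be ga : C) : 0 <= ga ->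
  (forall t, 0 <= t * al + t^* * be + t^* * t * ga) -> al = 0 /\ be = 0.
Proof.
move=> ga_ge0 Ht.
have sum0 : al + be = 0.
  apply: (real_quadratic_ge0_linear_eq0 ga_ge0) => r r_real.
  by have := Ht r; rewrite (CrealP r_real) expr2 mulrDr.
have dif0 : 'i * (al - be) = 0.
  apply: (real_quadratic_ge0_linear_eq0 ga_ge0) => r r_real.
  have := Ht ('i * r); rewrite rmorphM /= conjCi (CrealP r_real).
  have -> : - 'i * r * ('i * r) = r ^+ 2.
    by rewrite !mulNr mulrACA -expr2 sqrCi mulN1r opprK expr2.
  by congr (0 <= _); ring.
move/eqP: dif0; rewrite mulf_eq0 (negbTE (neq0Ci _)) subr_eq0 => /eqP be_al.
move: sum0; rewrite -be_al -mulr2n -mulr_natr => /eqP.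
by rewrite mulf_eq0 pnatr_eq0 orbF => /eqP.
Qed.

Section Adjoint.
Variable C : numClosedFieldType.

Definition ctrmx m n (A : 'M[C]_(m, n)) : 'M[C]_(n, m) := (map_mx Num.conj A)^T.

Lemma ctrmxE m n (A : 'M[C]_(m, n)) i j : ctrmx A i j = (A j i)^*.
Proof. by rewrite !mxE. Qed.

Lemma ctrmx_map_tr m n (A : 'M[C]_(m, n)) : ctrmx A = map_mx Num.conj A^T.
Proof. by rewrite /ctrmx map_trmx. Qed.

Lemma ctrmxK m n (A : 'M[C]_(m, n)) : ctrmx (ctrmx A) = A.
Proof. by apply/matrixP => i j; rewrite !ctrmxE conjCK. Qed.

Lemma ctrmx_mul m n p (A : 'M[C]_(m, n)) (B : 'M[C]_(n, p)) :
  ctrmx (A *m B) = ctrmx B *m ctrmx A.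
Proof. by rewrite /ctrmx map_mxM trmx_mul. Qed.

Lemma ctrmxD m n (A B : 'M[C]_(m, n)) : ctrmx (A + B) = ctrmx A + ctrmx B.
Proof. by apply/matrixP => i j; rewrite !mxE rmorphD. Qed.

Lemma ctrmxZ m n c (A : 'M[C]_(m, n)) : ctrmx (c *: A) = c^* *: ctrmx A.
Proof. by apply/matrixP => i j; rewrite !mxE rmorphM. Qed.

Lemma ctrmx0 m n : ctrmx (0 : 'M[C]_(m, n)) = 0.
Proof. by apply/matrixP => i j; rewrite !mxE rmorph0. Qed.

Lemma ctrmx1 n : ctrmx (1%:M : 'M[C]_n) = 1%:M.
Proof. by apply/matrixP => i j; rewrite !mxE eq_sym rmorph_nat. Qed.

Lemma ctrmx_delta m n i j : ctrmx (delta_mx i j : 'M[C]_(m, n)) = delta_mx j i.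
Proof. by apply/matrixP => k l; rewrite !mxE rmorph_nat andbC. Qed.

Lemma ctrmx_of_hermitian_combinations n (u w : 'M[C]_n) :
  (forall t, ctrmx (t *: u + t^* *: w) = t *: u + t^* *: w) -> w = ctrmx u.
Proof.
move=> herm; apply/matrixP => i j.
have := congr1 (fun A : 'M[C]_n => A i j) (herm 1).
have := congr1 (fun A : 'M[C]_n => A i j) (herm 'i).
rewrite !mxE conjC1 !mul1r !rmorphD !rmorphM /= conjCK conjCi.
set x := u i j; set y := w i j; set a := (u j i)^*; set b := (w j i)^*.
move=> Ei E1.
have {}Ei : b - a = x - y.
  apply: (mulfI (neq0Ci C)); transitivity (- 'i * a + 'i * b); first ring.
  by rewrite Ei; ring.
have : (y - a) *+ 2 = (x + y - (a + b)) - ((x - y) - (b - a)) by ring.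
by rewrite -E1 -Ei !subrr => /eqP; rewrite mulrn_eq0 /= subr_eq0 => /eqP.
Qed.
End Adjoint.

Section PsdMatrices.
Variables (C : numClosedFieldType) (n : nat).
Implicit Types (p q : 'M[C]_n) (v w : 'rV[C]_n).

Definition sform v w p := (v *m p *m ctrmx w) 0 0.
Definition qform v p := sform v v p.
(* [psdmx] and [pdmx] are [psd] and [pd] over an arbitrary [numClosedFieldType];
   for [C := R[i]] they are convertible to them. *)
Definition psdmx p := ctrmx p = p /\ forall v, 0 <= qform v p.
Definition pdmx p := ctrmx p = p /\ forall v, v != 0 -> 0 < qform v p.

Lemma sformD v w p q : sform v w (p + q) = sform v w p + sform v w q.
Proof. by rewrite /sform mulmxDr mulmxDl mxE. Qed.

Lemma sformN v w p : sform v w (- p) = - sform v w p.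
Proof. by rewrite /sform mulmxN mulNmx mxE. Qed.

Lemma sformZ v w c p : sform v w (c *: p) = c * sform v w p.
Proof. by rewrite /sform -scalemxAr -scalemxAl mxE. Qed.

Lemma sform_delta i j p : sform (delta_mx 0 i) (delta_mx 0 j) p = p i j.
Proof. by rewrite /sform ctrmx_delta -rowE -colE !mxE. Qed.

Lemma qformDZ v w c p : qform (v + c *: w) p =
  qform v p + c^* * sform v w p + c * sform w v p + c * c^* * qform w p.
Proof.
rewrite /qform /sform ctrmxD ctrmxZ !mulmxDl !mulmxDr -!scalemxAl -!scalemxAr !mxE.
ring.
Qed.

Lemma qform_eq0 p : (forall v, qform v p = 0) -> p = 0.
Proof.
move=> p0; apply/matrixP => i j; rewrite mxE.
have pkk k : p k k = 0 by rewrite -sform_delta; apply: p0.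
have := p0 (delta_mx 0 i + 1 *: delta_mx 0 j).
have := p0 (delta_mx 0 i + 'i *: delta_mx 0 j).
rewrite !qformDZ /qform !sform_delta !pkk conjC1 conjCi !mulr0 !addr0 !add0r !mul1r.
move=> /eqP; rewrite mulNr addrC -mulrBr mulf_eq0 (negbTE (neq0Ci C)) subr_eq0 /= => /eqP pji.
by rewrite pji -mulr2n => /eqP; rewrite mulrn_eq0 /= => /eqP.
Qed.

Lemma psdmx0 : psdmx 0.
Proof.
split=> [|v]; first exact: ctrmx0.
by rewrite /qform /sform mulmx0 mul0mx mxE.
Qed.

Lemma psdmxD p q : psdmx p -> psdmx q -> psdmx (p + q).
Proof.
move=> [p_herm p_ge0] [q_herm q_ge0]; split=> [|v]; first by rewrite ctrmxD p_herm q_herm.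
by rewrite /qform sformD; exact: addr_ge0 (p_ge0 v) (q_ge0 v).
Qed.

Lemma psdmx_gram m (c : 'M[C]_(m, n)) : psdmx (ctrmx c *m c).
Proof.
split=> [|v]; first by rewrite ctrmx_mul ctrmxK.
rewrite /qform /sform mulmxA -mulmxA -[c *m ctrmx v]ctrmxK ctrmx_mul ctrmxK mxE.
by apply: sumr_ge0 => k _; rewrite ctrmxE mul_conjC_ge0.
Qed.

Lemma psdmx_delta i : psdmx (delta_mx i i).
Proof.
by rewrite -[delta_mx i i](@mul_delta_mx C n 1 n 0 i i) -ctrmx_delta; apply: psdmx_gram.
Qed.

Lemma psdmx_addr_eq0 p q : psdmx p -> psdmx q -> p + q = 0 -> p = 0.
Proof.
move=> [_ p_ge0] [_ q_ge0] /eqP; rewrite addr_eq0 => /eqP p_def.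
apply: qform_eq0 => v; apply/eqP; rewrite eq_le p_ge0 andbT.
by rewrite p_def /qform sformN oppr_le0; apply: q_ge0.
Qed.

Lemma psdmx_factor p : psdmx p -> exists b : 'M[C]_n, p = ctrmx b *m b.
Proof.
move=> [p_herm p_ge0].
have /hermitian_normalmx/orthomx_spectralP : p \is hermsymmx.
  by apply/is_hermitianmxP; rewrite expr0 scale1r -ctrmx_map_tr p_herm.
set P := spectralmx p; set d := spectral_diag p.
have P_unitary : P \is unitarymx := spectral_unitarymx p.
have PPt : P *m ctrmx P = 1%:M by rewrite ctrmx_map_tr; apply/unitarymxP.
rewrite invmx_unitary // -ctrmx_map_tr => p_def.
have d_ge0 i : 0 <= d 0 i.
  have := p_ge0 (delta_mx 0 i *m P).
  rewrite /qform /sform ctrmx_mul p_def !mulmxA -(mulmxA _ P) PPt mulmx1.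
  rewrite -(mulmxA _ P) PPt mulmx1 -rowE row_diag_mx ctrmx_delta.
  by rewrite -scalemxAl mul_delta_mx !mxE !eqxx mulr1.
exists (diag_mx (map_mx sqrtC d) *m P).
rewrite p_def ctrmx_mul -!mulmxA; congr (_ *m _); rewrite !mulmxA; congr (_ *m _).
apply/matrixP => i j; rewrite mul_mx_diag !mxE.
have [<-|_] := eqVneq i j; last by rewrite !mulr0n rmorph0 mul0r.
by rewrite !mulr1n geC0_conj ?sqrtC_ge0 // -expr2 sqrtCK.
Qed.

End PsdMatrices.

Section LinearMaps.
Variables (K : pzRingType) (V : lmodType K) (f : V -> V).
Hypothesis f_lin : linear f.

Lemma linD u v : f (u + v) = f u + f v.
Proof. by have := f_lin 1 u v; rewrite !scale1r. Qed.

Lemma lin0 : f 0 = 0.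
Proof. by apply: (addrI (f 0)); rewrite -linD !addr0. Qed.

Lemma linZ c u : f (c *: u) = c *: f u.
Proof. by have := f_lin c u 0; rewrite !addr0 lin0 addr0. Qed.

Lemma linB u v : f (u - v) = f u - f v.
Proof. by rewrite linD -scaleN1r linZ scaleN1r. Qed.

End LinearMaps.

Section SchwarzMaps.
Variables (C : numClosedFieldType) (D : nat).
Local Notation M := 'M[C]_D.
Implicit Types (psi : M -> M) (a x y : M).

Definition defect psi x y := psi (ctrmx x *m y) - ctrmx (psi x) *m psi y.

(* Likewise [unital_schwarz_map] and [mult_domain] are convertible to
   [unital_schwarz] and [mult_dom] for [C := R[i]]. *)
Definition unital_schwarz_map psi :=
  linear psi /\ psi 1%:M = 1%:M /\ forall a, psdmx (defect psi a a).

Definition mult_domain psi a :=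
  psi (ctrmx a *m a) = ctrmx (psi a) *m psi a /\
  psi (a *m ctrmx a) = psi a *m ctrmx (psi a).

Section Sesquilinearity.
Variable psi : M -> M.
Hypothesis psi_lin : linear psi.

Lemma defectDl x1 x2 y : defect psi (x1 + x2) y = defect psi x1 y + defect psi x2 y.
Proof.
by rewrite /defect ctrmxD mulmxDl !(linD psi_lin) ctrmxD mulmxDl opprD addrACA.
Qed.

Lemma defectDr x y1 y2 : defect psi x (y1 + y2) = defect psi x y1 + defect psi x y2.
Proof. by rewrite /defect !mulmxDr !(linD psi_lin) mulmxDr opprD addrACA. Qed.

Lemma defectZl c x y : defect psi (c *: x) y = c^* *: defect psi x y.
Proof.
by rewrite /defect ctrmxZ -scalemxAl !(linZ psi_lin) ctrmxZ -scalemxAl scalerBr.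
Qed.

Lemma defectZr c x y : defect psi x (c *: y) = c *: defect psi x y.
Proof. by rewrite /defect -scalemxAr !(linZ psi_lin) -scalemxAr scalerBr. Qed.

Lemma defect_expand x y t :
  defect psi (x + t *: y) (x + t *: y) = defect psi x x + t *: defect psi x y
    + t^* *: defect psi y x + (t^* * t) *: defect psi y y.
Proof. by rewrite defectDl !defectDr !defectZl !defectZr scalerA !addrA. Qed.

End Sesquilinearity.

Section UnitalSchwarz.
Variable psi : M -> M.
Hypothesis psi_schwarz : unital_schwarz_map psi.
Let psi_lin : linear psi := proj1 psi_schwarz.
Let psi_unital : psi 1%:M = 1%:M := proj1 (proj2 psi_schwarz).

Lemma schwarz_defect_psd x : psdmx (defect psi x x).
Proof. exact: (proj2 (proj2 psi_schwarz)). Qed.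

Lemma schwarz_psd x : psdmx x -> psdmx (psi x).
Proof.
move=> /psdmx_factor [b ->]; rewrite -(subrK (ctrmx (psi b) *m psi b) (psi _)).
exact: psdmxD (schwarz_defect_psd b) (psdmx_gram _).
Qed.

Lemma schwarz_ctrmx x : psi (ctrmx x) = ctrmx (psi x).
Proof.
apply: ctrmx_of_hermitian_combinations => t.
have [herm _] := schwarz_psd (psdmx_gram (1%:M + t *: x)).
have [square_herm _] := schwarz_psd (psdmx_gram x).
move: herm; rewrite ctrmxD ctrmxZ ctrmx1 mulmxDl !mulmxDr !mul1mx mulmx1.
rewrite -scalemxAl -scalemxAr scalerA !(linD psi_lin) !(linZ psi_lin).
rewrite psi_unital !ctrmxD !ctrmxZ ctrmx1 square_herm.
rewrite rmorphM /= conjCK mulrC.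
by rewrite -!addrA => /addrI; rewrite !addrA => /addIr.
Qed.

Lemma defect_cross_eq0 u y :
  defect psi u u = 0 -> defect psi u y = 0 /\ defect psi y u = 0.
Proof.
move=> u0; suff forms v : qform v (defect psi u y) = 0 /\ qform v (defect psi y u) = 0.
  by split; apply: qform_eq0 => v; have [] := forms v.
have [_ /(_ v) y_ge0] := schwarz_defect_psd y.
apply: sesquilinear_ge0_cross_eq0 y_ge0 _ => t.
have [_ /(_ v)] := schwarz_defect_psd (u + t *: y).
by rewrite defect_expand // u0 add0r /qform 2!sformD !sformZ; apply.
Qed.

Lemma mult_domainE a :
  mult_domain psi a <-> defect psi a a = 0 /\ defect psi (ctrmx a) (ctrmx a) = 0.
Proof.
rewrite /mult_domain /defect ctrmxK schwarz_ctrmx ctrmxK.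
by split=> [[-> ->]|[/subr0_eq -> /subr0_eq ->]]; rewrite ?subrr.
Qed.

Lemma mult_domain_subspace : subspace_prop (mult_domain psi).
Proof.
have closed c u v : defect psi u u = 0 -> defect psi v v = 0 ->
    defect psi (c *: u + v) (c *: u + v) = 0.
  move=> u0 v0; have [vu0 uv0] := defect_cross_eq0 u v0.
  by rewrite addrC defect_expand // v0 u0 vu0 uv0 !scaler0 !addr0.
split.
  apply/mult_domainE; rewrite ctrmx0 /defect mulmx0 (lin0 psi_lin) ctrmx0 mul0mx.
  by rewrite subrr.
move=> c u v /mult_domainE [u0 u0'] /mult_domainE [v0 v0']; apply/mult_domainE.
by rewrite ctrmxD ctrmxZ; split; apply: closed.
Qed.

End UnitalSchwarz.

Lemma schwarz_id : unital_schwarz_map id.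
Proof. by do 2!split=> //; move=> a; rewrite /defect subrr; apply: psdmx0. Qed.

Lemma defect_comp psi1 psi2 x : linear psi2 ->
  defect (psi2 \o psi1) x x = psi2 (defect psi1 x x) + defect psi2 (psi1 x) (psi1 x).
Proof. by move=> psi2_lin; rewrite /defect /= (linB psi2_lin) addrA subrK. Qed.

Lemma schwarz_comp psi1 psi2 : unital_schwarz_map psi1 -> unital_schwarz_map psi2 ->
  unital_schwarz_map (psi2 \o psi1).
Proof.
move=> schwarz1 schwarz2; have [lin1 [unit1 _]] := schwarz1; have [lin2 [unit2 _]] := schwarz2.
split=> [c u v|]; first by rewrite /= lin1 lin2.
split=> [|a]; first by rewrite /= unit1 unit2.
rewrite defect_comp //; apply: psdmxD _ (schwarz_defect_psd schwarz2 _).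
apply: (schwarz_psd schwarz2); exact: schwarz_defect_psd.
Qed.

Definition faithful psi := forall x, psdmx x -> psi x = 0 -> x = 0.

Lemma mult_domain_comp psi1 psi2 a :
  unital_schwarz_map psi1 -> unital_schwarz_map psi2 -> faithful psi2 ->
  mult_domain (psi2 \o psi1) a <-> mult_domain psi1 a /\ mult_domain psi2 (psi1 a).
Proof.
move=> schwarz1 schwarz2 faithful2.
have defect0 x : defect (psi2 \o psi1) x x = 0 <->
    defect psi1 x x = 0 /\ defect psi2 (psi1 x) (psi1 x) = 0.
  rewrite defect_comp; last exact: proj1 schwarz2.
  split=> [sum0|[-> ->]]; last by rewrite (lin0 (proj1 schwarz2)) addr0.
  have psi2_psd := schwarz_psd schwarz2 (schwarz_defect_psd schwarz1 x).
  have psi2_0 := psdmx_addr_eq0 psi2_psd (schwarz_defect_psd schwarz2 _) sum0.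
  split; first exact: faithful2 (schwarz_defect_psd schwarz1 x) psi2_0.
  by rewrite psi2_0 add0r in sum0.
rewrite (mult_domainE (schwarz_comp schwarz1 schwarz2)) !defect0.
by rewrite (mult_domainE schwarz1) (mult_domainE schwarz2) /= (schwarz_ctrmx schwarz1); tauto.
Qed.

Lemma faithful_of_primitive (psi : M -> M) : unital_schwarz_map psi ->
  (exists m, forall x, psdmx x -> x != 0 -> pdmx (iter m psi x)) -> faithful psi.
Proof.
move=> [psi_lin [psi_unital _]] [m pd_iter] x x_psd psix0; apply/eqP; apply: contraT => x_neq0.
have [i _] : exists i : 'I_D, true.
  apply/existsP; apply: contraR x_neq0 => /existsPn noI.
  by apply/eqP/matrixP => i; have := noI i.
have e_neq0 (j : 'I_D) : delta_mx 0 j != 0 :> 'rV[C]_D.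
  by apply/eqP => /matrixP /(_ 0 j); rewrite !mxE !eqxx => /eqP; rewrite oner_eq0.
case: m pd_iter => [|m] pd_iter.
  (* Here [iter 0 psi] is the identity, so [delta_mx i i] is definite: [D = 1]. *)
  have all_i j : j = i.
    have delta_neq0 : delta_mx i i != 0 :> M.
      by apply/eqP => /matrixP /(_ i i); rewrite !mxE !eqxx => /eqP; rewrite oner_eq0.
    have [_ /(_ _ (e_neq0 j))] := pd_iter _ (psdmx_delta _ i) delta_neq0.
    by rewrite /qform sform_delta mxE andbb; case: eqP => // _; rewrite ltxx.
  have x_scalar : x = x i i *: 1%:M.
    by apply/matrixP => j k; rewrite !mxE (all_i j) (all_i k) eqxx mulr1.
  by move: psix0 x_neq0; rewrite x_scalar (linZ psi_lin) psi_unital => ->; rewrite eqxx.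
have [_ /(_ _ (e_neq0 i))] := pd_iter x x_psd x_neq0.
rewrite iterSr psix0 iter_fix ?(lin0 psi_lin) //.
by rewrite /qform /sform mulmx0 mul0mx mxE ltxx.
Qed.

Lemma schwarz_iter (psi : M -> M) k : unital_schwarz_map psi -> unital_schwarz_map (iter k psi).
Proof.
move=> psi_schwarz; elim: k => [|k IHk]; first exact: schwarz_id.
exact: schwarz_comp IHk psi_schwarz.
Qed.

Section Iterates.
Variable phi : M -> M.
Hypotheses (phi_schwarz : unital_schwarz_map phi) (phi_faithful : faithful phi).
Local Notation MD k := (mult_domain (iter k phi)).

Definition mult_domain_cap_at k := forall a, (forall m, MD m a) <-> MD k a.

Lemma faithful_iter k : faithful (iter k phi).
Proof.
elim: k => [|k IHk] x x_psd phix0 //; apply: (IHk _ x_psd).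
exact: phi_faithful (schwarz_psd (schwarz_iter k phi_schwarz) x_psd) phix0.
Qed.

Lemma mult_domain_iterSr k a : MD k.+1 a <-> mult_domain phi a /\ MD k (phi a).
Proof.
have MD_comp := mult_domain_comp a phi_schwarz (schwarz_iter k phi_schwarz) (@faithful_iter k).
by apply: iff_trans MD_comp; rewrite /mult_domain !iterSr.
Qed.

Lemma mult_domain_iter_leq m k a : (m <= k)%N -> MD k a -> MD m a.
Proof.
elim: m k a => [|m IHm] [|k] a //; try by split.
rewrite ltnS => mk /mult_domain_iterSr [phi_a MD_k]; apply/mult_domain_iterSr.
by split=> //; apply: IHm MD_k.
Qed.

Lemma mult_domain_iter_stable k : (forall a, MD k a <-> MD k.+1 a) ->
  forall m a, (k <= m)%N -> MD m a <-> MD k a.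
Proof.
move=> stable_k m a /subnK <-; elim: (m - k)%N a => [|j IHj] a; first by rewrite add0n.
by rewrite addSn mult_domain_iterSr IHj -mult_domain_iterSr stable_k.
Qed.

Lemma mult_domain_cap_at_stable k :
  (forall a, MD k a <-> MD k.+1 a) -> mult_domain_cap_at k.
Proof.
move=> stable_k a; split=> [|MD_k m]; first by apply.
have [mk|km] := leqP m k; first exact: mult_domain_iter_leq mk MD_k.
exact/(mult_domain_iter_stable stable_k _ (ltnW km)).
Qed.

Lemma mult_domain_eventually_stable : exists k, forall a, MD k a <-> MD k.+1 a.
Proof.
have MD_subspace k : subspace_prop (MD k).
  exact: mult_domain_subspace (schwarz_iter k phi_schwarz).
exact: subspace_chain_stable MD_subspace (fun k _ => mult_domain_iter_leq (leqnSn k)).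
Qed.

Lemma mult_domain_cap_minimal :
  exists k, mult_domain_cap_at k /\ forall j, mult_domain_cap_at j -> (k <= j)%N.
Proof.
apply: ex_minimal_nat; have [k stable_k] := mult_domain_eventually_stable.
by exists k; apply: mult_domain_cap_at_stable.
Qed.

Lemma mult_domain_stable_iff k n : mult_domain_cap_at k ->
  (forall j, mult_domain_cap_at j -> (k <= j)%N) ->
  (forall a, MD n a <-> MD n.+1 a) <-> (k <= n)%N.
Proof.
move=> cap_k min_k; split=> [stable_n|kn a]; first exact/min_k/mult_domain_cap_at_stable.
split; last exact: mult_domain_iter_leq (leqnSn n).
by move=> /(mult_domain_iter_leq kn) /cap_k.
Qed.

End Iterates.

End SchwarzMaps.

Theorem lemma3p7 (R : realType) (D : nat) (phi : 'M[R[i]]_D -> 'M[R[i]]_D) (n : nat) :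
  unital_schwarz phi -> primitive phi ->
  (exists k, is_kappa phi k) /\
  (forall k, is_kappa phi k ->
     ((forall a, mult_dom (iter n phi) a <-> mult_dom (iter n.+1 phi) a) <-> (k <= n)%N)).
Proof.
move=> phi_schwarz /(faithful_of_primitive phi_schwarz) phi_faithful.
split; first exact: mult_domain_cap_minimal.
by move=> k [cap_k min_k]; apply: mult_domain_stable_iff.
Qed.
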